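(* (1) Co-commensurability is an equivalence relation on pairs $(G,\alpha)$ consisting of a compact group $G$ and an automorphism $\alpha$ of $G$. (2) Two such pairs $(H_1,\alpha_1)$ and $(H_2,\alpha_2)$ are co-commensurable if and only if there is a pair $(L,\gamma)$ (a compact group with automorphism) and surjective homomorphisms $\psi_i:H_i\to L$ with finite kernels satisfying $\gamma\circ\psi_i=\psi_i\circ\alpha_i$ for $i=1,2$.
   Context: Pairs $(G_1,\alpha_1)$ and $(G_2,\alpha_2)$ are co-commensurable if there is a pair $(G,\alpha)$ (compact group with automorphism) and surjective continuous homomorphisms $\varphi_i:G\to G_i$ with finite kernels satisfying $\varphi_i\circ\alpha=\alpha_i\circ\varphi_i$ for $i=1,2$. *)

From HB Require Import structures.
From mathcomp Require Import all_boot all_order.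
From mathcomp Require Import all_classical all_reals topology.
Set Implicit Arguments. Unset Strict Implicit. Unset Printing Implicit Defensive.
Local Open Scope classical_set_scope.

Record CGroup := {
  cg_carrier :> topologicalType;
  cg_mul : cg_carrier -> cg_carrier -> cg_carrier;
  cg_one : cg_carrier;
  cg_inv : cg_carrier -> cg_carrier;
  cg_mulA : forall x y z, cg_mul x (cg_mul y z) = cg_mul (cg_mul x y) z;
  cg_mul1g : forall x, cg_mul cg_one x = x;
  cg_mulg1 : forall x, cg_mul x cg_one = x;
  cg_mulVg : forall x, cg_mul (cg_inv x) x = cg_one;
  cg_mulgV : forall x, cg_mul x (cg_inv x) = cg_one;
  cg_mul_cont : continuous (fun p : cg_carrier * cg_carrier => cg_mul p.1 p.2);
  cg_inv_cont : continuous cg_inv;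
  cg_compact : compact [set: cg_carrier];
  cg_hausdorff : hausdorff_space cg_carrier
}.

Definition is_hom (G H : CGroup) (f : G -> H) : Prop :=
  forall x y, f (cg_mul x y) = cg_mul (f x) (f y).

Definition is_auto (G : CGroup) (a : G -> G) : Prop :=
  is_hom a /\ continuous a /\
  exists b : G -> G, cancel a b /\ cancel b a /\ continuous b.

Definition fk_quot (G H : CGroup) (f : G -> H) : Prop :=
  is_hom f /\ continuous f /\ (forall y : H, exists x : G, f x = y) /\
  finite_set [set x : G | f x = cg_one H].

Record CGPair := {
  cgp_group :> CGroup;
  cgp_aut : cgp_group -> cgp_group;
  cgp_autP : is_auto cgp_aut
}.

Arguments cgp_aut : clear implicits.

Definition cocommensurable (P1 P2 : CGPair) : Prop :=
  exists (P : CGPair) (phi1 : P -> P1) (phi2 : P -> P2),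
    fk_quot phi1 /\ fk_quot phi2 /\
    (forall x : P, phi1 (cgp_aut P x) = cgp_aut P1 (phi1 x)) /\
    (forall x : P, phi2 (cgp_aut P x) = cgp_aut P2 (phi2 x)).

From HB Require Import structures.
From mathcomp Require Import all_boot all_order.
From mathcomp Require Import all_classical all_reals topology.
Set Implicit Arguments. Unset Strict Implicit. Unset Printing Implicit Defensive.
Local Open Scope classical_set_scope.

(* Transitivity and the converse in (2) both rest on fibre products: for
   finite-kernel quotients f : G1 -> L and g : G2 -> L commuting with the
   automorphisms, {(x, y) | f x = g y} is a closed, hence compact, subgroup of
   G1 x G2 on which the automorphisms act coordinatewise; its projections are
   onto, with kernels embedded in ker g and ker f.
   For the forward direction of (2), let phi_i : G -> H_i. The image
   N = phi1 (ker phi2) is a finite normal subgroup of H1, invariant under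
   alpha1, so L = H1 / N is a compact Hausdorff group with an induced
   automorphism. The map H2 -> L is obtained by factoring G -> H1 -> L through
   phi2, whose kernel lands in N; it is continuous because a continuous
   surjection from a compact space onto a Hausdorff space is a quotient map. *)

Lemma surj_ind (T U : Type) (f : T -> U) : (forall y, exists x, f x = y) ->
  forall P : U -> Prop, (forall x, P (f x)) -> forall y, P y.
Proof. by move=> fS P Pf y; have [x <-] := fS y. Qed.

Section ContinuityFacts.
Context {X Y Z : topologicalType}.

Lemma fst_continuous : continuous (@fst X Y).
Proof. by move=> p; apply: cvg_fst. Qed.

Lemma snd_continuous : continuous (@snd X Y).
Proof. by move=> p; apply: cvg_snd. Qed.

Lemma pair_continuous (f : Z -> X) (g : Z -> Y) :
  continuous f -> continuous g -> continuous (fun z => (f z, g z)).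
Proof. by move=> cf cg z; apply: cvg_pair; [apply: cf|apply: cg]. Qed.

Lemma comp_continuous (f : X -> Y) (g : Y -> Z) :
  continuous f -> continuous g -> continuous (g \o f).
Proof. by move=> cf cg x; apply: continuous_comp; [apply: cf|apply: cg]. Qed.

Lemma closed_equalizer (u v : X -> Y) : hausdorff_space Y ->
  continuous u -> continuous v -> closed [set x | u x = v x].
Proof.
move=> hY cu cv; rewrite -openC openE => x /= nuv.
rewrite open_hausdorff in hY; have /eqP/hY [[U V] /= [uU vV]] := nuv.
move: uU vV => /set_mem uU /set_mem vV [oU oV /eqP UV0].
have : open_nbhs x (u @^-1` U `&` v @^-1` V).
  by split=> //; apply: openI; [move/continuousP: cu|move/continuousP: cv]; apply.
move=> /open_nbhs_nbhs; apply: filterS => y [Uy Vy] /= uv.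
suff : (U `&` V) (u y) by rewrite UV0.
by split=> //; rewrite uv.
Qed.

Lemma hausdorff_separated (f : X -> Y) (g : X -> Z) :
  hausdorff_space Y -> hausdorff_space Z -> continuous f -> continuous g ->
  (forall x x', f x = f x' -> g x = g x' -> x = x') -> hausdorff_space X.
Proof.
have sep (W : topologicalType) (h : X -> W) x x' : hausdorff_space W ->
    continuous h -> h x != h x' ->
    exists2 AB : set X * set X, x \in AB.1 /\ x' \in AB.2 &
      [/\ open AB.1, open AB.2 & AB.1 `&` AB.2 == set0].
  rewrite open_hausdorff => hW ch /hW [[U V] /= [xU xV] [oU oV /eqP UV0]].
  exists (h @^-1` U, h @^-1` V); first by rewrite !inE; split; apply/set_mem.
  split; [by move/continuousP: ch; apply..|].
  by apply/eqP; rewrite -preimage_setI UV0 preimage_set0.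
move=> hY hZ cf cg fg; rewrite open_hausdorff => x x' xx'.
have [e|nf] := pselect (f x = f x'); last by apply: (sep _ f) => //; apply/eqP.
apply: (sep _ g) => //; apply/eqP => eg; move/eqP: xx'; apply; exact: fg e eg.
Qed.

Lemma continuous_surj_compact (p : X -> Y) (h : Y -> Z) :
  compact [set: X] -> hausdorff_space Y -> continuous p ->
  (forall y, exists x, p x = y) -> continuous (h \o p) -> continuous h.
Proof.
move=> cX hY cp pS chp; apply/continuousP => W oW.
rewrite -[_ @^-1` _]setCK; apply: closed_openC.
have -> : ~` (h @^-1` W) = p @` ((h \o p) @^-1` (~` W)).
  rewrite comp_preimage image_preimage //; apply/seteqP; split=> // y _.
  by have [x <-] := pS y; exists x.
apply: compact_closed => //; apply: continuous_compact.
  exact: continuous_subspaceT.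
apply: subclosed_compact cX _ => //.
by rewrite preimage_setC; apply: open_closedC; move/continuousP: chp; apply.
Qed.

End ContinuityFacts.

Lemma set_val_continuous (T : topologicalType) (S : set T) :
  continuous (set_val : set_type S -> T).
Proof. exact: initial_continuous. Qed.

Lemma compact_set_type (T : topologicalType) (S : set T) :
  compact S -> compact [set: set_type S].
Proof.
move=> cS F PF _.
have FS : (set_val @ F) S.
  by rewrite /fmap /=; apply: filterS (filterT) => x _; apply: set_valP.
have [q [Sq clq]] := cS _ _ FS.
exists (SigSub (mem_set Sq)); split=> // A B FA.
rewrite nbhsE => -[_ [[U oU <-] Uq] UB].
have FA' : (set_val @ F) (set_val @` A).
  by rewrite /fmap /=; apply: filterS FA => a Aa; exists a.
have [_ [[a Aa <-] Ua]] := clq _ _ FA' (open_nbhs_nbhs (conj oU Uq)).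
by exists a; split=> //; apply: UB.
Qed.

Section GroupFacts.
Variable G : CGroup.
Implicit Types x y z : G.

Lemma cg_mulKg x y : cg_mul (cg_inv x) (cg_mul x y) = y.
Proof. by rewrite cg_mulA cg_mulVg cg_mul1g. Qed.

Lemma cg_mulKVg x y : cg_mul x (cg_mul (cg_inv x) y) = y.
Proof. by rewrite cg_mulA cg_mulgV cg_mul1g. Qed.

Lemma cg_mulgK x y : cg_mul (cg_mul y x) (cg_inv x) = y.
Proof. by rewrite -cg_mulA cg_mulgV cg_mulg1. Qed.

Lemma cg_mulgI x y z : cg_mul x y = cg_mul x z -> y = z.
Proof. by move=> e; rewrite -(cg_mulKg x y) e cg_mulKg. Qed.

Lemma cg_invg1 : cg_inv (cg_one G) = cg_one G.
Proof. by rewrite -{2}(cg_mulVg (cg_one G)) cg_mulg1. Qed.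

Lemma cg_invMg x y : cg_inv (cg_mul x y) = cg_mul (cg_inv y) (cg_inv x).
Proof.
by apply: (@cg_mulgI (cg_mul x y)); rewrite cg_mulgV -cg_mulA cg_mulKVg cg_mulgV.
Qed.

Lemma cg_invgK x : cg_inv (cg_inv x) = x.
Proof. by apply: (@cg_mulgI (cg_inv x)); rewrite cg_mulgV cg_mulVg. Qed.

Lemma mul_continuous (Z : topologicalType) (f g : Z -> G) :
  continuous f -> continuous g -> continuous (fun w => cg_mul (f w) (g w)).
Proof.
move=> cf cg.
exact: comp_continuous (pair_continuous cf cg) (@cg_mul_cont G).
Qed.

End GroupFacts.

Section Homomorphisms.
Variables (G H : CGroup) (f : G -> H).
Hypothesis f_hom : is_hom f.

Lemma hom1 : f (cg_one G) = cg_one H.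
Proof. by apply: (@cg_mulgI _ (f (cg_one G))); rewrite -f_hom !cg_mulg1. Qed.

Lemma homV x : f (cg_inv x) = cg_inv (f x).
Proof. by apply: (@cg_mulgI _ (f x)); rewrite -f_hom !cg_mulgV hom1. Qed.

Lemma can_hom (g : H -> G) : cancel f g -> cancel g f -> is_hom g.
Proof. by move=> fK gK x y; rewrite -{1}(gK x) -{1}(gK y) -f_hom fK. Qed.


End Homomorphisms.

Lemma finite_preimage_fk (G H : CGroup) (f : G -> H) (B : set H) :
  fk_quot f -> finite_set B -> finite_set (f @^-1` B).
Proof.
move=> [f_hom [_ [fS fker]]] fB; have [s sK] : {s : H -> G | cancel s f}.
  by exists (fun y => projT1 (cid (fS y))) => y; apply: projT2 (cid (fS y)).
apply: (@sub_finite_set _ _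
  ((fun p => cg_mul (s p.1) p.2) @` (B `*` [set x | f x = cg_one H]))).
  move=> x Bx; exists (f x, cg_mul (cg_inv (s (f x))) x) => /=.
    by split=> //=; rewrite f_hom (homV f_hom) sK cg_mulVg.
  exact: cg_mulKVg.
by apply: finite_image; apply: finite_setX.
Qed.

Lemma morph_can (A B : Type) (f : A -> B) (aA bA : A -> A) (aB bB : B -> B) :
  cancel bA aA -> cancel aB bB -> {morph f : x / aA x >-> aB x} ->
  {morph f : x / bA x >-> bB x}.
Proof. by move=> bAK aBK fa x; rewrite -{2}(bAK x) fa aBK. Qed.

Lemma fk_id (G : CGroup) : fk_quot (@id G).
Proof.
split=> //; split; first by move=> x; apply: cvg_id.
by split; [move=> y; exists y|apply: finite_set1].
Qed.

Lemma fk_comp (G H K : CGroup) (f : G -> H) (g : H -> K) :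
  fk_quot f -> fk_quot g -> fk_quot (g \o f).
Proof.
move=> fk [g_hom [g_cont [gS gker]]]; have [f_hom [f_cont [fS _]]] := fk.
split; first by move=> x y /=; rewrite f_hom g_hom.
split; first exact: comp_continuous f_cont g_cont.
split; first by move=> z; have [y <-] := gS z; have [x <-] := fS y; exists x.
exact: finite_preimage_fk fk gker.
Qed.

(** * Factoring through quotients *)

Section Factorization.
Variables (G H L : CGroup) (phi : G -> H) (k : G -> L).
Hypotheses (phi_hom : is_hom phi) (phi_cont : continuous phi)
  (phi_surj : forall y, exists x, phi x = y).
Hypotheses (k_hom : is_hom k) (k_cont : continuous k)
  (ker_sub : forall x, phi x = cg_one H -> k x = cg_one L).

Definition factor (y : H) : L := k (projT1 (cid (phi_surj y))).

Lemma factorE x : factor (phi x) = k x.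
Proof.
rewrite /factor; case: cid => s /= ss.
have : k (cg_mul (cg_inv s) x) = cg_one L.
  by apply: ker_sub; rewrite phi_hom (homV phi_hom) ss cg_mulVg.
rewrite k_hom (homV k_hom) => /(congr1 (cg_mul (k s))).
by rewrite cg_mulKVg cg_mulg1.
Qed.

Lemma factor_hom : is_hom factor.
Proof.
move=> y y'; elim/(surj_ind phi_surj): y => x; elim/(surj_ind phi_surj): y' => x'.
by rewrite -phi_hom !factorE k_hom.
Qed.

Lemma factor_continuous : continuous factor.
Proof.
apply: (continuous_surj_compact (@cg_compact G) (@cg_hausdorff H) phi_cont
  phi_surj).
by rewrite (_ : factor \o phi = k) //; apply: funext => x; apply: factorE.
Qed.

Lemma fk_factor : fk_quot k -> fk_quot factor.
Proof.
move=> [_ [_ [kS kker]]].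
split; first exact: factor_hom.
split; first exact: factor_continuous.
split; first by move=> z; have [x <-] := kS z; exists (phi x); apply: factorE.
apply: sub_finite_set (finite_image phi kker) => y.
by elim/(surj_ind phi_surj): y => x /=; rewrite factorE => kx; exists x.
Qed.

End Factorization.

(** * Quotient by a finite normal subgroup *)

Section QuotientByFiniteNormal.
Variables (H : CGroup) (N : set H).
Hypotheses (N1 : N (cg_one H))
  (NM : forall x y, N x -> N y -> N (cg_mul x y))
  (NV : forall x, N x -> N (cg_inv x))
  (NJ : forall y x, N x -> N (cg_mul (cg_mul y x) (cg_inv y)))
  (N_finite : finite_set N).

Definition coset (x : H) : set H := [set y | N (cg_mul (cg_inv x) y)].

Definition quot := set_type (range coset).
HB.instance Definition _ := Choice.on quot.

Definition qproj (x : H) : quot := SigSub (mem_set (imageT coset x)).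

Lemma coset_eq x y : coset x = coset y <-> N (cg_mul (cg_inv x) y).
Proof.
split=> [exy|nxy].
  suff : coset y y by rewrite -exy.
  by rewrite /coset /= cg_mulVg.
apply/seteqP; split=> z /=.
  by move=> /(NM (NV nxy)); rewrite cg_invMg cg_invgK -cg_mulA cg_mulKVg.
by move=> /(NM nxy); rewrite -cg_mulA cg_mulKVg.
Qed.

Lemma qproj_eq x y : qproj x = qproj y <-> N (cg_mul (cg_inv x) y).
Proof.
rewrite -coset_eq; split=> [/(congr1 val) //|exy].
exact: val_inj.
Qed.

Lemma qproj_surj (A : quot) : exists x, qproj x = A.
Proof. by have [x _ eA] := set_valP A; exists x; apply: val_inj. Qed.

Definition qopen (W : set quot) := open (qproj @^-1` W).

Lemma qopenT : qopen setT.
Proof. exact: openT. Qed.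

Lemma qopenI : setI_closed qopen.
Proof. by move=> U V oU oV; rewrite /qopen preimage_setI; apply: openI. Qed.

Lemma qopen_bigcup (I : Type) (f : I -> set quot) :
  (forall i, qopen (f i)) -> qopen (\bigcup_i f i).
Proof.
move=> fo; rewrite /qopen preimage_bigcup.
by apply: bigcup_open => i _; apply: fo.
Qed.

HB.instance Definition _ :=
  isOpenTopological.Build quot qopenT qopenI qopen_bigcup.

Lemma qproj_continuous : continuous qproj.
Proof. by apply/continuousP. Qed.

Lemma continuous_quot (Y : topologicalType) (h : quot -> Y) :
  continuous (h \o qproj) -> continuous h.
Proof. by move=> /continuousP chq; apply/continuousP => W /chq. Qed.

(* The saturation of [U] is the union of its translates by [N]. *)
Lemma qproj_open (U : set H) : open U -> open (qproj @` U).
Proof.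
move=> oU; rewrite [open _]/open /= /qopen.
have -> : qproj @^-1` (qproj @` U) =
    \bigcup_(n in N) ((fun y => cg_mul y (cg_inv n)) @^-1` U).
  apply/seteqP; split=> y /=.
    move=> [u Uu /qproj_eq nuy]; exists (cg_mul (cg_inv u) y) => //=.
    by rewrite cg_invMg cg_invgK cg_mulKVg.
  move=> [n Nn /= Uyn]; exists (cg_mul y (cg_inv n)) => //; apply/qproj_eq.
  by rewrite cg_invMg cg_invgK -cg_mulA cg_mulVg cg_mulg1.
apply: bigcup_open => n _.
have /continuousP : continuous (fun y : H => cg_mul y (cg_inv n)).
  by apply: mul_continuous => [y|]; [apply: cvg_id|apply: cst_continuous].
exact.
Qed.

Definition qrepr (A : quot) : H := projT1 (cid (qproj_surj A)).

Lemma qreprK A : qproj (qrepr A) = A.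
Proof. exact: projT2 (cid (qproj_surj A)). Qed.

Lemma N_qrepr x : N (cg_mul (cg_inv x) (qrepr (qproj x))).
Proof.
have /qproj_eq/NV := qreprK (qproj x).
by rewrite cg_invMg cg_invgK.
Qed.

Definition qmul (A B : quot) : quot := qproj (cg_mul (qrepr A) (qrepr B)).
Definition qone : quot := qproj (cg_one H).
Definition qinv (A : quot) : quot := qproj (cg_inv (qrepr A)).

Lemma qprojM x y : qproj (cg_mul x y) = qmul (qproj x) (qproj y).
Proof.
apply/qproj_eq; have := NM (NJ (cg_inv y) (N_qrepr x)) (N_qrepr y).
by rewrite cg_invgK -(cg_mulA _ y) cg_mulKVg cg_invMg !cg_mulA.
Qed.

Lemma qprojV x : qproj (cg_inv x) = qinv (qproj x).
Proof.
apply/qproj_eq; have := NJ x (NV (N_qrepr x)).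
by rewrite cg_invgK cg_invMg cg_invgK !cg_mulA cg_mulgK.
Qed.

Lemma qproj_eq1 x : qproj x = qone <-> N x.
Proof.
rewrite qproj_eq cg_mulg1; split=> [/NV|/NV //].
by rewrite cg_invgK.
Qed.

Let qproj_ind := surj_ind qproj_surj.

Lemma qmulA A B C : qmul A (qmul B C) = qmul (qmul A B) C.
Proof.
elim/qproj_ind: A => x; elim/qproj_ind: B => y; elim/qproj_ind: C => z.
by rewrite -!qprojM cg_mulA.
Qed.

Lemma qmul1g A : qmul qone A = A.
Proof. by elim/qproj_ind: A => x; rewrite -qprojM cg_mul1g. Qed.

Lemma qmulg1 A : qmul A qone = A.
Proof. by elim/qproj_ind: A => x; rewrite -qprojM cg_mulg1. Qed.

Lemma qmulVg A : qmul (qinv A) A = qone.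
Proof. by elim/qproj_ind: A => x; rewrite -qprojV -qprojM cg_mulVg. Qed.

Lemma qmulgV A : qmul A (qinv A) = qone.
Proof. by elim/qproj_ind: A => x; rewrite -qprojV -qprojM cg_mulgV. Qed.

Lemma qinv_continuous : continuous qinv.
Proof.
apply: continuous_quot; rewrite (_ : qinv \o qproj = qproj \o @cg_inv H).
  exact: comp_continuous (@cg_inv_cont H) qproj_continuous.
by apply: funext => x /=; rewrite qprojV.
Qed.

Lemma qmul_continuous : continuous (fun p : quot * quot => qmul p.1 p.2).
Proof.
apply/continuousP => W oW; rewrite openE => -[A B]; move: A B.
elim/qproj_ind => x; elim/qproj_ind => y /= Wxy.
have : nbhs (cg_mul x y) (qproj @^-1` W).
  by apply: open_nbhs_nbhs; split; [apply: oW|rewrite /= qprojM].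
move=> /(@cg_mul_cont H (x, y)) [[P Q] /= [nP nQ] PQ].
move: nP nQ; rewrite !nbhsE => -[U [oU Ux] UP] [V [oV Vy] VQ].
exists (qproj @` U, qproj @` V) => /=.
  split; apply: open_nbhs_nbhs; (split; first exact: qproj_open).
    by exists x.
  by exists y.
move=> [_ _] /= [[u Uu <-] [v Vv <-]] /=; rewrite -qprojM.
exact: (PQ (u, v) (conj (UP u Uu) (VQ v Vv))).
Qed.

Lemma quot_compact : compact [set: quot].
Proof.
have := continuous_compact (continuous_subspaceT qproj_continuous)
  (@cg_compact H).
congr compact; apply/seteqP; split=> // A _.
by have [x <-] := qproj_surj A; exists x.
Qed.

(* Distinct cosets are separated because [qproj] is open and the relation
   [N (x^-1 y)] is closed, [N] being finite. *)
Lemma quot_hausdorff : hausdorff_space quot.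
Proof.
rewrite open_hausdorff => A B; elim/qproj_ind: A => x; elim/qproj_ind: B => y nxy.
pose R := (fun p : H * H => cg_mul (cg_inv p.1) p.2) @^-1` N.
have cR : closed R.
  have cN : closed N.
    exact: (proj1 accessible_finite_set_closed
      (hausdorff_accessible (@cg_hausdorff H)) _ N_finite).
  have /continuousP cf : continuous (fun p : H * H => cg_mul (cg_inv p.1) p.2).
    apply: mul_continuous snd_continuous.
    exact: comp_continuous fst_continuous (@cg_inv_cont H).
  by rewrite /R -openC preimage_setC; apply: cf; rewrite openC.
have : nbhs (x, y) (~` R).
  apply: open_nbhs_nbhs; split; first by rewrite openC.
  by move=> /qproj_eq exy; move/eqP: nxy.
move=> [[P Q] /= [nP nQ] PQR].
move: nP nQ; rewrite !nbhsE => -[U [oU Ux] UP] [V [oV Vy] VQ].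
exists (qproj @` U, qproj @` V) => /=.
  by rewrite !inE; split; [exists x|exists y].
split; [exact: qproj_open|exact: qproj_open|].
apply/eqP/seteqP; split=> // _ [[u Uu <-] [v Vv /esym/qproj_eq nuv]].
exact: PQR (u, v) (conj (UP u Uu) (VQ v Vv)) nuv.
Qed.

Definition quot_group : CGroup := @Build_CGroup quot qmul qone qinv
  qmulA qmul1g qmulg1 qmulVg qmulgV qmul_continuous qinv_continuous
  quot_compact quot_hausdorff.

Lemma qproj_hom : is_hom (qproj : H -> quot_group).
Proof. exact: qprojM. Qed.

Lemma fk_qproj : fk_quot (qproj : H -> quot_group).
Proof.
split; first exact: qproj_hom.
split; first exact: qproj_continuous.
split; first exact: qproj_surj.
by apply: sub_finite_set N_finite => x /qproj_eq1.
Qed.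

Section QuotientMap.
Variable c : H -> H.
Hypotheses (c_hom : is_hom c) (c_cont : continuous c)
  (cN : forall x, N x -> N (c x)).

Definition quot_map : quot_group -> quot_group :=
  @factor H quot_group quot_group qproj (qproj \o c) qproj_surj.

Let qproj_c_hom : is_hom (qproj \o c : H -> quot_group).
Proof. by move=> x y /=; rewrite c_hom qprojM. Qed.

Let qproj_c_ker x : qproj x = qone -> qproj (c x) = qone.
Proof. by rewrite !qproj_eq1; apply: cN. Qed.

Lemma quot_mapE x : quot_map (qproj x) = qproj (c x).
Proof. exact: (factorE qproj_hom _ qproj_c_hom qproj_c_ker). Qed.

Lemma quot_map_hom : is_hom quot_map.
Proof. exact: (factor_hom qproj_hom _ qproj_c_hom qproj_c_ker). Qed.

Lemma quot_map_continuous : continuous quot_map.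
Proof.
apply: (factor_continuous qproj_hom qproj_continuous qproj_c_hom _ qproj_c_ker).
exact: comp_continuous c_cont qproj_continuous.
Qed.

End QuotientMap.

Lemma quot_map_auto (a : H -> H) :
  is_auto a -> (forall x, N (a x) <-> N x) -> is_auto (quot_map a).
Proof.
move=> [a_hom [a_cont [b [aK [bK b_cont]]]]] aN.
have aN' x : N x -> N (a x) by move/aN.
have bN x : N x -> N (b x) by move=> Nx; apply/aN; rewrite bK.
have b_hom := can_hom a_hom aK bK.
split; first exact: quot_map_hom a_hom aN'.
split; first exact: quot_map_continuous a_hom a_cont aN'.
exists (quot_map b); split; [|split].
- by elim/qproj_ind => x; rewrite (quot_mapE a_hom aN') (quot_mapE b_hom bN) aK.
- by elim/qproj_ind => x; rewrite (quot_mapE b_hom bN) (quot_mapE a_hom aN') bK.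
- exact: quot_map_continuous b_hom b_cont bN.
Qed.

End QuotientByFiniteNormal.

(** * Fibre products *)

Section FibreProduct.
Variables (A B C : CGroup) (f : A -> C) (g : B -> C).
Hypotheses (f_hom : is_hom f) (g_hom : is_hom g)
  (f_cont : continuous f) (g_cont : continuous g).

Definition fibre : set (A * B) := [set p | f p.1 = g p.2].
Definition fprod := set_type fibre.

Definition fp1 (x : fprod) : A := (val x).1.
Definition fp2 (x : fprod) : B := (val x).2.

Lemma fp12 x : f (fp1 x) = g (fp2 x).
Proof. exact: set_valP x. Qed.

Lemma fp_inj x y : fp1 x = fp1 y -> fp2 x = fp2 y -> x = y.
Proof.
case: x y => [[a b] ?] [[a' b'] ?]; rewrite /fp1 /fp2 /= => ea eb.
by apply: val_inj; rewrite /= ea eb.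
Qed.

Lemma fp1_continuous : continuous fp1.
Proof. exact: comp_continuous (@set_val_continuous _ fibre) fst_continuous. Qed.

Lemma fp2_continuous : continuous fp2.
Proof. exact: comp_continuous (@set_val_continuous _ fibre) snd_continuous. Qed.

Lemma fprod_continuous (Z : topologicalType) (h : Z -> fprod) :
  continuous (fp1 \o h) -> continuous (fp2 \o h) -> continuous h.
Proof.
move=> c1 c2; apply: continuous_comp_initial.
rewrite (_ : _ \o h = fun z => (fp1 (h z), fp2 (h z))).
  exact: pair_continuous.
by apply: funext => z /=; rewrite /fp1 /fp2; case: (h z) => -[].
Qed.

Lemma fibreM x y : fibre (cg_mul (fp1 x) (fp1 y), cg_mul (fp2 x) (fp2 y)).
Proof. by rewrite /fibre /= f_hom g_hom !fp12. Qed.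

Lemma fibre1 : fibre (cg_one A, cg_one B).
Proof. by rewrite /fibre /= (hom1 f_hom) (hom1 g_hom). Qed.

Lemma fibreV x : fibre (cg_inv (fp1 x), cg_inv (fp2 x)).
Proof. by rewrite /fibre /= (homV f_hom) (homV g_hom) fp12. Qed.

Definition fp_mul (x y : fprod) : fprod := SigSub (mem_set (fibreM x y)).
Definition fp_one : fprod := SigSub (mem_set fibre1).
Definition fp_inv (x : fprod) : fprod := SigSub (mem_set (fibreV x)).

Lemma fp_mulA x y z : fp_mul x (fp_mul y z) = fp_mul (fp_mul x y) z.
Proof. by apply: fp_inj; rewrite /fp1 /fp2 /= cg_mulA. Qed.

Lemma fp_mul1g x : fp_mul fp_one x = x.
Proof. by apply: fp_inj; rewrite /fp1 /fp2 /= cg_mul1g. Qed.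

Lemma fp_mulg1 x : fp_mul x fp_one = x.
Proof. by apply: fp_inj; rewrite /fp1 /fp2 /= cg_mulg1. Qed.

Lemma fp_mulVg x : fp_mul (fp_inv x) x = fp_one.
Proof. by apply: fp_inj; rewrite /fp1 /fp2 /= cg_mulVg. Qed.

Lemma fp_mulgV x : fp_mul x (fp_inv x) = fp_one.
Proof. by apply: fp_inj; rewrite /fp1 /fp2 /= cg_mulgV. Qed.

Lemma fp_mul_continuous : continuous (fun p : fprod * fprod => fp_mul p.1 p.2).
Proof.
apply: fprod_continuous; apply: mul_continuous.
- exact: comp_continuous fst_continuous fp1_continuous.
- exact: comp_continuous snd_continuous fp1_continuous.
- exact: comp_continuous fst_continuous fp2_continuous.
- exact: comp_continuous snd_continuous fp2_continuous.
Qed.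

Lemma fp_inv_continuous : continuous fp_inv.
Proof.
apply: fprod_continuous.
- exact: comp_continuous fp1_continuous (@cg_inv_cont A).
- exact: comp_continuous fp2_continuous (@cg_inv_cont B).
Qed.

Lemma fprod_compact : compact [set: fprod].
Proof.
apply: compact_set_type; apply: (@subclosed_compact _ _ setT) => //.
  apply: closed_equalizer (@cg_hausdorff C) _ _.
    exact: comp_continuous fst_continuous f_cont.
  exact: comp_continuous snd_continuous g_cont.
by rewrite -setXTT; apply: compact_setX; apply: cg_compact.
Qed.

Lemma fprod_hausdorff : hausdorff_space fprod.
Proof.
exact: hausdorff_separated (@cg_hausdorff A) (@cg_hausdorff B)
  fp1_continuous fp2_continuous fp_inj.
Qed.

Definition fprod_group : CGroup := @Build_CGroup fprod fp_mul fp_one fp_inv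
  fp_mulA fp_mul1g fp_mulg1 fp_mulVg fp_mulgV fp_mul_continuous
  fp_inv_continuous fprod_compact fprod_hausdorff.

End FibreProduct.

Lemma finite_set_inj (T U : Type) (S : set T) (h : T -> U) :
  {in S &, injective h} -> finite_set (h @` S) -> finite_set S.
Proof. by move=> hI; rewrite (eq_finite_set (inj_card_eq hI)). Qed.

Section FibreProductMaps.
Variables (A B C : CGroup) (f : A -> C) (g : B -> C).
Hypotheses (f_hom : is_hom f) (g_hom : is_hom g)
  (f_cont : continuous f) (g_cont : continuous g).
Local Notation F := (fprod_group f_hom g_hom f_cont g_cont).

Lemma fk_fp1 : fk_quot g -> fk_quot (@fp1 _ _ _ f g : F -> A).
Proof.
move=> [_ [_ [gS gker]]].
split=> //; split; first exact: fp1_continuous.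
split.
  move=> a; have [b gb] := gS (f a).
  by exists (SigSub (mem_set (esym gb : fibre f g (a, b)))).
apply: (@finite_set_inj _ _ _ (@fp2 _ _ _ f g)).
  by move=> x y /set_mem /= x1 /set_mem /= y1 e2; apply: fp_inj; rewrite ?x1 ?y1.
apply: sub_finite_set gker => _ [x /= x1 <-] /=.
by rewrite -fp12 x1 (hom1 f_hom).
Qed.

Lemma fk_fp2 : fk_quot f -> fk_quot (@fp2 _ _ _ f g : F -> B).
Proof.
move=> [_ [_ [fS fker]]].
split=> //; split; first exact: fp2_continuous.
split.
  move=> b; have [a fa] := fS (g b).
  by exists (SigSub (mem_set (fa : fibre f g (a, b)))).
apply: (@finite_set_inj _ _ _ (@fp1 _ _ _ f g)).
  by move=> x y /set_mem /= x2 /set_mem /= y2 e1; apply: fp_inj; rewrite ?x2 ?y2.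
apply: sub_finite_set fker => _ [x /= x2 <-] /=.
by rewrite fp12 x2 (hom1 g_hom).
Qed.

Section Map.
Variables (aA : A -> A) (aB : B -> B) (aC : C -> C).
Hypotheses (eA : {morph f : x / aA x >-> aC x})
  (eB : {morph g : x / aB x >-> aC x}).

Lemma fibre_map (x : fprod f g) : fibre f g (aA (fp1 x), aB (fp2 x)).
Proof. by rewrite /fibre /= eA eB fp12. Qed.

Definition fp_map (x : F) : F := SigSub (mem_set (fibre_map x)).

Lemma fp_map_hom : is_hom aA -> is_hom aB -> is_hom fp_map.
Proof. by move=> hA hB x y; apply: fp_inj; rewrite /fp1 /fp2 /= ?hA ?hB. Qed.

Lemma fp_map_continuous : continuous aA -> continuous aB -> continuous fp_map.
Proof.
move=> cA cB; apply: fprod_continuous.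
  exact: comp_continuous (@fp1_continuous _ _ _ f g) cA.
exact: comp_continuous (@fp2_continuous _ _ _ f g) cB.
Qed.

End Map.

Lemma fp_map_auto (aA : A -> A) (aB : B -> B) (aC : C -> C)
    (eA : {morph f : x / aA x >-> aC x}) (eB : {morph g : x / aB x >-> aC x}) :
  is_auto aA -> is_auto aB -> is_auto aC -> is_auto (fp_map eA eB).
Proof.
move=> [hA [cA [bA [aAK [bAK cbA]]]]] [hB [cB [bB [aBK [bBK cbB]]]]].
move=> [_ [_ [bC [aCK _]]]].
have eA' := morph_can bAK aCK eA; have eB' := morph_can bBK aCK eB.
split; first exact: fp_map_hom hA hB.
split; first exact: fp_map_continuous cA cB.
exists (fp_map eA' eB'); split; [|split].
- by move=> x; apply: fp_inj; rewrite /fp1 /fp2 /= ?aAK ?aBK.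
- by move=> x; apply: fp_inj; rewrite /fp1 /fp2 /= ?bAK ?bBK.
- exact: fp_map_continuous cbA cbB.
Qed.

End FibreProductMaps.

Definition has_common_quotient (H1 H2 : CGPair) : Prop :=
  exists (L : CGPair) (psi1 : H1 -> L) (psi2 : H2 -> L),
    fk_quot psi1 /\ fk_quot psi2 /\
    (forall x : H1, cgp_aut L (psi1 x) = psi1 (cgp_aut H1 x)) /\
    (forall x : H2, cgp_aut L (psi2 x) = psi2 (cgp_aut H2 x)).

Section CommonQuotient.
Variables (P H1 H2 : CGPair) (phi1 : P -> H1) (phi2 : P -> H2).
Hypotheses (fk1 : fk_quot phi1) (fk2 : fk_quot phi2)
  (e1 : {morph phi1 : x / cgp_aut P x >-> cgp_aut H1 x})
  (e2 : {morph phi2 : x / cgp_aut P x >-> cgp_aut H2 x}).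

Let phi1_hom := proj1 fk1.
Let phi2_hom := proj1 fk2.
Let phi1_surj := proj1 (proj2 (proj2 fk1)).
Let phi2_surj := proj1 (proj2 (proj2 fk2)).

Definition image_ker : set H1 := phi1 @` [set x | phi2 x = cg_one H2].

Lemma image_ker1 : image_ker (cg_one H1).
Proof. by exists (cg_one P); [apply: hom1|apply: hom1]. Qed.

Lemma image_kerM y y' : image_ker y -> image_ker y' -> image_ker (cg_mul y y').
Proof.
move=> [x /= x1 <-] [x' /= x'1 <-]; exists (cg_mul x x'); last exact: phi1_hom.
by rewrite /= phi2_hom x1 x'1 cg_mulg1.
Qed.

Lemma image_kerV y : image_ker y -> image_ker (cg_inv y).
Proof.
move=> [x /= x1 <-]; exists (cg_inv x); last exact: homV.
by rewrite /= (homV phi2_hom) x1 cg_invg1.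
Qed.

Lemma image_kerJ z y : image_ker y -> image_ker (cg_mul (cg_mul z y) (cg_inv z)).
Proof.
move=> [x /= x1 <-]; have [w <-] := phi1_surj z.
exists (cg_mul (cg_mul w x) (cg_inv w)).
  by rewrite /= !phi2_hom x1 cg_mulg1 (homV phi2_hom) cg_mulgV.
by rewrite !phi1_hom (homV phi1_hom).
Qed.

Lemma finite_image_ker : finite_set image_ker.
Proof. exact/finite_image/(proj2 (proj2 (proj2 fk2))). Qed.

Lemma image_ker_morph (c : P -> P) (c1 : H1 -> H1) (c2 : H2 -> H2) :
  is_hom c2 -> {morph phi1 : x / c x >-> c1 x} ->
  {morph phi2 : x / c x >-> c2 x} -> forall y, image_ker y -> image_ker (c1 y).
Proof.
move=> c2_hom ec1 ec2 _ [x /= x1 <-]; exists (c x); last exact: ec1.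
by rewrite /= ec2 x1 (hom1 c2_hom).
Qed.

Lemma image_ker_aut y : image_ker (cgp_aut H1 y) <-> image_ker y.
Proof.
have [_ [_ [b [_ [bK _]]]]] := cgp_autP P.
have [_ [_ [b1 [a1K _]]]] := cgp_autP H1.
have [a2_hom [_ [b2 [a2K [b2K _]]]]] := cgp_autP H2.
split; last exact: (image_ker_morph a2_hom e1 e2).
move=> /(image_ker_morph (can_hom a2_hom a2K b2K) (morph_can bK a1K e1)
  (morph_can bK a2K e2)).
by rewrite a1K.
Qed.

Definition common_quot : CGroup :=
  quot_group image_ker1 image_kerM image_kerV image_kerJ finite_image_ker.

Local Notation psi1 := (qproj image_ker : H1 -> common_quot).

Definition common_quot_pair : CGPair :=
  Build_CGPair (quot_map_auto image_ker1 image_kerM image_kerV image_kerJ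
    finite_image_ker (cgp_autP H1) image_ker_aut).

Definition quot_proj2 : H2 -> common_quot := factor (psi1 \o phi1) phi2_surj.

Lemma common_quotient : has_common_quotient H1 H2.
Proof.
have psi1_fk : fk_quot psi1 :=
  fk_qproj image_ker1 image_kerM image_kerV image_kerJ finite_image_ker.
have k_fk : fk_quot (psi1 \o phi1) := fk_comp fk1 psi1_fk.
have [k_hom [k_cont _]] := k_fk; have [_ [phi2_cont _]] := fk2.
have ker_sub x : phi2 x = cg_one H2 -> psi1 (phi1 x) = cg_one common_quot.
  by move=> x1; apply/(qproj_eq1 image_ker1 image_kerM image_kerV); exists x.
have psi2E x : quot_proj2 (phi2 x) = psi1 (phi1 x).
  exact: (factorE phi2_hom _ k_hom ker_sub).
have [a1_hom _] := cgp_autP H1.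
have a1N y : image_ker y -> image_ker (cgp_aut H1 y) by move/image_ker_aut.
have autE y : cgp_aut common_quot_pair (psi1 y) = psi1 (cgp_aut H1 y).
  exact: quot_mapE a1_hom a1N y.
exists common_quot_pair, psi1, quot_proj2.
split; first exact: psi1_fk.
split; first exact: (fk_factor phi2_hom phi2_cont _ k_hom k_cont ker_sub k_fk).
split; first exact: autE.
by elim/(surj_ind phi2_surj) => x; rewrite psi2E autE -e1 -e2 psi2E.
Qed.

End CommonQuotient.

Lemma cocommensurable_refl (P : CGPair) : cocommensurable P P.
Proof. by exists P, id, id; split; [exact: fk_id|split; [exact: fk_id|]]. Qed.

Lemma cocommensurable_sym (P Q : CGPair) :
  cocommensurable P Q -> cocommensurable Q P.
Proof. by move=> [G [f1 [f2 [fk1 [fk2 [e1 e2]]]]]]; exists G, f2, f1. Qed.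

Lemma cocommensurable_fibre (P1 P2 Q : CGPair) (f : P1 -> Q) (g : P2 -> Q) :
  fk_quot f -> fk_quot g ->
  {morph f : x / cgp_aut P1 x >-> cgp_aut Q x} ->
  {morph g : x / cgp_aut P2 x >-> cgp_aut Q x} ->
  cocommensurable P1 P2.
Proof.
move=> fk gk ef eg; have [f_hom [f_cont _]] := fk; have [g_hom [g_cont _]] := gk.
pose P := Build_CGPair (fp_map_auto f_hom g_hom f_cont g_cont ef eg
  (cgp_autP P1) (cgp_autP P2) (cgp_autP Q)).
exists P, (@fp1 _ _ _ f g), (@fp2 _ _ _ f g).
by split; [exact: fk_fp1|split; [exact: fk_fp2|]].
Qed.

Lemma cocommensurable_trans (P Q R : CGPair) :
  cocommensurable P Q -> cocommensurable Q R -> cocommensurable P R.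
Proof.
move=> [G [f1 [f2 [fk1 [fk2 [e1 e2]]]]]] [G' [g1 [g2 [gk1 [gk2 [e1' e2']]]]]].
have [S [p1 [p2 [pk1 [pk2 [ep1 ep2]]]]]] := cocommensurable_fibre fk2 gk1 e2 e1'.
exists S, (f1 \o p1), (g2 \o p2).
do 2 (split; first exact: fk_comp).
by split=> x /=; rewrite ?ep1 ?ep2 ?e1 ?e2'.
Qed.

Lemma cocommensurable_common_quotientP (H1 H2 : CGPair) :
  cocommensurable H1 H2 <-> has_common_quotient H1 H2.
Proof.
split=> [[P [phi1 [phi2 [fk1 [fk2 [e1 e2]]]]]]|].
  exact: common_quotient e1 e2.
move=> [L [psi1 [psi2 [fk1 [fk2 [e1 e2]]]]]].
by apply: cocommensurable_fibre fk1 fk2 _ _ => x; rewrite ?e1 ?e2.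
Qed.

Theorem proposition6p15 :
  ((forall P : CGPair, cocommensurable P P) /\
   (forall P Q : CGPair, cocommensurable P Q -> cocommensurable Q P) /\
   (forall P Q R : CGPair,
      cocommensurable P Q -> cocommensurable Q R -> cocommensurable P R)) /\
  (forall H1 H2 : CGPair,
     cocommensurable H1 H2 <->
     exists (L : CGPair) (psi1 : H1 -> L) (psi2 : H2 -> L),
       fk_quot psi1 /\ fk_quot psi2 /\
       (forall x : H1, cgp_aut L (psi1 x) = psi1 (cgp_aut H1 x)) /\
       (forall x : H2, cgp_aut L (psi2 x) = psi2 (cgp_aut H2 x))).
Proof.
split; last exact: cocommensurable_common_quotientP.
split; first exact: cocommensurable_refl.
by split; [exact: cocommensurable_sym|exact: cocommensurable_trans].
Qed.
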